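(* Let $\sigma:[0,\infty)\to[0,\infty)$ be nondecreasing with $\lim_{t\to\infty}\sigma(t)=\infty$, admitting $\varrho$ as a proximate order with $\lim_{t\to\infty}\varrho(t)=\rho$. Then $\beta(\sigma)=\mu(\sigma)=\rho(\sigma)=\alpha(\sigma)=\rho$. Consequently, if $\sigma$ admits a nonzero proximate order, then $\sigma$ satisfies $(\omega_1)$ and $(\omega_6)$.
   Context: A proximate order is a function $\varrho:(c,\infty)\to[0,\infty)$, $c\ge0$, which is continuous and piecewise continuously differentiable, with $\lim_{t\to\infty}\varrho(t)=\rho<\infty$ and $\lim_{t\to\infty}t\varrho'(t)\log t=0$; it is nonzero if $\rho>0$. $\sigma$ admits $\varrho$ as a proximate order if there are $A,B>0$ with $A\le\sigma(t)/t^{\varrho(t)}\le B$ for all $t$ large enough. For a positive measurable $f$ on $[A,\infty)$: $\alpha(f):=\inf\{\alpha:\exists C_\alpha>0\ \forall\Lambda>1,\ \limsup_{x\to\infty}\sup_{\lambda\in[1,\Lambda]}\frac{f(\lambda x)}{\lambda^{\alpha}f(x)}\le C_\alpha\}$, $\beta(f):=\sup\{\beta:\exists D_\beta>0\ \forall\Lambda>1,\ \liminf_{x\to\infty}\inf_{\lambda\in[1,\Lambda]}\frac{f(\lambda x)}{\lambda^{\beta}f(x)}\ge D_\beta\}$, $\mu(f):=\liminf_{x\to\infty}\frac{\log f(x)}{\log x}$, $\rho(f):=\limsup_{x\to\infty}\frac{\log f(x)}{\log x}$; for $\sigma$ these are computed on any $[A,\infty)$, $A>0$, where $\sigma>0$.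 Condition $(\omega_1)$: $\sigma(2t)=O(\sigma(t))$ as $t\to\infty$. Condition $(\omega_6)$: there is $H\ge1$ with $2\sigma(t)\le\sigma(Ht)+H$ for all $t\ge0$. *)

From HB Require Import structures.
From mathcomp Require Import all_boot all_order all_algebra.
From mathcomp Require Import all_classical all_reals all_analysis.
Set Implicit Arguments. Unset Strict Implicit. Unset Printing Implicit Defensive.
Import Order.TTheory GRing.Theory Num.Theory.
Import numFieldNormedType.Exports.
Local Open Scope classical_set_scope.
Local Open Scope ring_scope.

Section Defs.
Context {R : realType}.

Definition limsup_pinfty (g : R -> \bar R) : \bar R := limf_esup g (pinfty_nbhs R).
Definition liminf_pinfty (g : R -> \bar R) : \bar R := limf_einf g (pinfty_nbhs R).

Definition sup_ratio (f : R -> R) (a L x : R) : \bar R :=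
  ereal_sup [set ((f (l * x)) / (l `^ a * f x))%:E | l in `[1, L]].
Definition inf_ratio (f : R -> R) (b L x : R) : \bar R :=
  ereal_inf [set ((f (l * x)) / (l `^ b * f x))%:E | l in `[1, L]].

Definition index_alpha (f : R -> R) : \bar R :=
  ereal_inf [set a%:E | a in [set a : R | exists2 C : R, 0 < C &
     forall L : R, 1 < L -> (limsup_pinfty (sup_ratio f a L) <= C%:E)%E]].

Definition index_beta (f : R -> R) : \bar R :=
  ereal_sup [set b%:E | b in [set b : R | exists2 D : R, 0 < D &
     forall L : R, 1 < L -> (D%:E <= liminf_pinfty (inf_ratio f b L))%E]].

Definition index_mu (f : R -> R) : \bar R :=
  liminf_pinfty (fun x => (ln (f x) / ln x)%:E).
Definition index_rho (f : R -> R) : \bar R :=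
  limsup_pinfty (fun x => (ln (f x) / ln x)%:E).

Definition piecewise_C1 (c : R) (rho : R -> R) : Prop :=
  exists D : set R, D `<=` `]c, +oo[ /\
    (forall T : R, finite_set (D `&` `]-oo, T])) /\
    (forall t, c < t -> ~ D t -> derivable rho t 1 /\ {for t, continuous (derive1 rho)}) /\
    (forall d, D d ->
       (exists l : R, (derive1 rho) x @[x --> d^'-] --> l) /\
       (exists l : R, (derive1 rho) x @[x --> d^'+] --> l)).

Definition proximate_order (c : R) (rho : R -> R) (r : R) : Prop :=
  [/\ 0 <= c,
      (forall t, c < t -> 0 <= rho t),
      {in `]c, +oo[, continuous rho} /\ piecewise_C1 c rho,
      rho t @[t --> +oo] --> r &
      (forall e : R, 0 < e -> \forall t \near +oo,
           derivable rho t 1 -> `|t * (derive1 rho) t * ln t| < e)].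

Definition admits_proximate_order (sigma rho : R -> R) : Prop :=
  exists A B : R, [/\ 0 < A, 0 < B &
    \forall t \near +oo, A <= sigma t / t `^ rho t <= B].

Definition omega1 (sigma : R -> R) : Prop :=
  exists C : R, \forall t \near +oo, `|sigma (2 * t)| <= C * `|sigma t|.

Definition omega6 (sigma : R -> R) : Prop :=
  exists2 H : R, 1 <= H & forall t, 0 <= t -> 2 * sigma t <= sigma (H * t) + H.

End Defs.

From HB Require Import structures.
From mathcomp Require Import all_boot all_order all_algebra.
From mathcomp Require Import all_classical all_reals all_analysis.
From mathcomp Require Import finmap.
From mathcomp Require Import ring lra.
Set Implicit Arguments. Unset Strict Implicit. Unset Printing Implicit Defensive.
Import Order.TTheory GRing.Theory Num.Theory.
Import numFieldNormedType.Exports.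
Local Open Scope classical_set_scope.
Local Open Scope ring_scope.

(** A proximate order [rho] with limit [r] varies so slowly that
  [|rho (l x) - rho x| * ln x <= k * ln l] for every [k > 0], [l >= 1] and large [x]:
  off its finitely many break points on each bounded interval, [rho t +- k ln (ln t)]
  has a nonnegative derivative.  As [sigma t / t ^ rho t] is bounded above and below
  and [rho t -> r], this gives, for each [e > 0], the bound
  [C^-1 * l ^ (r - e) <= sigma (l x) / sigma x <= C * l ^ (r + e)] for [l >= 1] and
  large [x], with [C] independent of [e].  That bound alone pins the indices: the
  normalised ratio [sigma (l x) / (l ^ a * sigma x)] stays bounded for [a] on one side
  of [r] and grows like a power of [l] on the other, and along [x = l * x0] it
  gives [ln (sigma x) / ln x -> r].  For [r > 0] it yields (omega_1) at [l = 2] and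
  (omega_6) at an [l] with [C^-1 * l ^ (r / 2) >= 2]. *)

Section limf_esup_einf_near.
Context {R : realType} {U : choiceType} {T : filteredType U} (F : set_system T)
  {FF : ProperFilter F}.
Implicit Types (g : T -> \bar R) (C : \bar R).
Local Open Scope ereal_scope.

Lemma limf_esup_le_near g C : (\forall x \near F, g x <= C) -> limf_esup g F <= C.
Proof.
move=> gC; rewrite limf_esupE; apply: ge_ereal_inf.
by exists (ereal_sup (g @` [set x | g x <= C])); [exists [set x | g x <= C]|
  apply: ge_ereal_sup => _ [x + <-]].
Qed.

Lemma limf_esup_ge_near g C : (\forall x \near F, C <= g x) -> C <= limf_esup g F.
Proof.
move=> Cg; rewrite limf_esupE; apply: le_ereal_inf_tmp => _ [V FV <-].
have [x [Vx /= Cgx]] := filter_ex (filterI FV Cg).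
by apply: le_ereal_sup_tmp; exists (g x) => //; exists x.
Qed.

Lemma limf_einf_ge_near g C : (\forall x \near F, C <= g x) -> C <= limf_einf g F.
Proof.
move=> Cg; rewrite limf_einfE; apply: le_ereal_sup_tmp.
by exists (ereal_inf (g @` [set x | C <= g x])); [exists [set x | C <= g x]|
  apply: le_ereal_inf_tmp => _ [x + <-]].
Qed.

Lemma limf_einf_le_near g C : (\forall x \near F, g x <= C) -> limf_einf g F <= C.
Proof.
move=> gC; rewrite limf_einfE; apply: ge_ereal_sup => _ [V FV <-].
have [x [Vx /= gxC]] := filter_ex (filterI FV gC).
by apply: ge_ereal_inf; exists (g x) => //; exists x.
Qed.

Lemma limf_esup_einf_cvg (g : T -> R) (r : R) : g x @[x --> F] --> r ->
  limf_esup (EFin \o g) F = r%:E /\ limf_einf (EFin \o g) F = r%:E.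
Proof.
move=> gr.
have near_r e : (0 < e)%R -> \forall x \near F, (r - e <= g x <= r + e)%R.
  move=> e0; apply: filterS (cvgr_dist_lt _ _ gr _ e0) => x.
  by rewrite ltr_norml => /andP[? ?]; apply/andP; split; lra.
have upper e : (0 < e)%R -> \forall x \near F, (g x)%:E <= (r + e)%:E.
  by move=> e0; apply: filterS (near_r e e0) => x /andP[_ ?] /=; rewrite lee_fin.
have lower e : (0 < e)%R -> \forall x \near F, (r - e)%:E <= (g x)%:E.
  by move=> e0; apply: filterS (near_r e e0) => x /andP[? _] /=; rewrite lee_fin.
split; apply/eqP; rewrite eq_le; apply/andP; split.
- by apply/lee_addgt0Pr => e /upper/limf_esup_le_near.
- by apply/lee_subgt0Pr => e /lower/limf_esup_ge_near.
- by apply/lee_addgt0Pr => e /upper/limf_einf_le_near.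
- by apply/lee_subgt0Pr => e /lower/limf_einf_ge_near.
Qed.

End limf_esup_einf_near.

Lemma near_pinfty_ge {R : realType} (P : R -> Prop) :
  (\forall t \near +oo, P t) -> \forall x \near +oo, forall t, x <= t -> P t.
Proof.
by move=> [M [Mr MP]]; exists M; split => // x Mx t xt; apply: MP; exact: lt_le_trans xt.
Qed.

Section piecewise_monotone.
Context {R : realType}.
Implicit Types (f : R -> R) (a b : R).

Lemma ger0_derive1_le_except_seq f (s : seq R) a b : a <= b ->
  {in `[a, b], continuous f} ->
  {in `]a, b[, forall x, x \notin s -> derivable f x 1 /\ 0 <= derive1 f x} ->
  f a <= f b.
Proof.
elim: s a b => [|d s IH] a b ab fc fd.
  apply: (@ger0_derive1_le_cc _ f a b); rewrite ?in_itv /= ?lexx ?ab //.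
  - by move=> x /fd[].
  - by move=> x /fd[].
  - by apply: continuous_in_subspaceT => x /set_mem; exact: fc.
have [/[dup] dab|dNab] := boolP (d \in `]a, b[).
  rewrite in_itv /= => /andP[ad db].
  apply: (@le_trans _ _ (f d)); apply: IH; rewrite ?ltW //.
  - by move=> x; rewrite !in_itv /= => /andP[? ?]; apply: fc; rewrite in_itv /=; lra.
  - move=> x; rewrite in_itv /= => /andP[ax xd] xs; apply: fd.
      by rewrite in_itv /=; lra.
    by rewrite in_cons negb_or xs andbT lt_eqF.
  - by move=> x; rewrite !in_itv /= => /andP[? ?]; apply: fc; rewrite in_itv /=; lra.
  - move=> x; rewrite in_itv /= => /andP[dx xb] xs; apply: fd.
      by rewrite in_itv /=; lra.
    by rewrite in_cons negb_or xs andbT gt_eqF.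
apply: IH => // x xab xs; apply: fd => //.
by rewrite in_cons negb_or xs andbT; apply: contraNneq dNab => <-.
Qed.

Lemma ger0_derive1_le_except_finite f (D : set R) a b : a <= b ->
  finite_set (D `&` `]-oo, b]) -> {in `[a, b], continuous f} ->
  {in `]a, b[, forall x, ~ D x -> derivable f x 1 /\ 0 <= derive1 f x} ->
  f a <= f b.
Proof.
move=> ab /finite_fsetP[X DX] fc fd.
apply: (@ger0_derive1_le_except_seq f (enum_fset X) a b ab fc) => x xab xX.
apply: fd => // Dx.
suff : [set` X] x by move/negP: xX.
rewrite -DX; split => //; move: xab; rewrite !in_itv /= => /andP[_ /ltW //].
Qed.

End piecewise_monotone.

Section lnln.
Context {R : realType}.

Lemma is_derive_lnln (t : R) : 1 < t ->
  is_derive t 1 (fun u => ln (ln u)) ((ln t)^-1 * t^-1).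
Proof.
move=> t1; have t0 := lt_trans ltr01 t1.
exact: is_derive1_comp (is_derive1_ln (ln_gt0 t1)) (is_derive1_ln t0).
Qed.

Lemma continuous_lnln (t : R) : 1 < t -> {for t, continuous (fun u => ln (ln u))}.
Proof.
move=> t1; apply: continuous_comp; first exact: continuous_ln (lt_trans ltr01 t1).
exact: continuous_ln (ln_gt0 t1).
Qed.

Lemma lnlnM_le (x l : R) : 1 < x -> 1 <= l -> ln (ln (l * x)) - ln (ln x) <= ln l / ln x.
Proof.
move=> x1 l1; have lx0 : 0 < ln x := ln_gt0 x1; have ll0 : 0 <= ln l := ln_ge0 l1.
have lnlx : ln (l * x) = ln x * (1 + ln l / ln x).
  rewrite lnM ?posrE ?(lt_le_trans ltr01 l1) ?(lt_trans ltr01 x1) //.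
  by rewrite mulrDr mulr1 mulrC divfK ?gt_eqF // addrC.
have q0 : 0 <= ln l / ln x by apply: divr_ge0 => //; exact: ltW.
have q1 : 0 < 1 + ln l / ln x by lra.
rewrite lnlx lnM ?posrE // addrC addKr.
by apply: le_ln1Dx; apply: lt_le_trans q0; rewrite ltrN10.
Qed.

End lnln.

Section proximate_order.
Context {R : realType} {rho : R -> R} {c r : R} (po : proximate_order c rho r).

Lemma proximate_order_lnln_homo (s k : R) : `|s| <= 1 -> 0 < k ->
  \forall x \near +oo, forall y, x <= y ->
    s * rho x + k * ln (ln x) <= s * rho y + k * ln (ln y).
Proof.
move=> s1 k0; case: po => _ _ [rc [D [_ [Dfin [Dd _]]]]] _ rder.
near=> x => y xy.
have x1 : 1 < x by near: x; exact: (nbhs_pinfty_gt (num_real _)).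
have cx : c < x by near: x; exact: (nbhs_pinfty_gt (num_real _)).
have rho'_small t : x <= t -> derivable rho t 1 -> `|t * derive1 rho t * ln t| < k.
  by move: t; near: x; apply: near_pinfty_ge; exact: rder.
apply: (@ger0_derive1_le_except_finite _ (fun u => s * rho u + k * ln (ln u)) D _ _ xy).
- exact: Dfin.
- move=> t; rewrite in_itv /= => /andP[xt _].
  apply: cvgD; apply: cvgM; [exact: cvg_cst| |exact: cvg_cst|].
    by apply: rc; rewrite in_itv /= andbT (lt_le_trans cx xt).
  exact/continuous_lnln/(lt_le_trans x1 xt).
- move=> t; rewrite in_itv /= => /andP[xt _] Dt.
  have [rho_t _] := Dd t (lt_trans cx xt) Dt.
  have small := rho'_small t (ltW xt) rho_t.
  have t1 := lt_trans x1 xt.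
  have dF : is_derive t 1 (fun u => s * rho u + k * ln (ln u))
      (s * derive1 rho t + k * ((ln t)^-1 * t^-1)).
    by apply: is_deriveD; apply: is_deriveZ;
      [rewrite derive1E; exact: derivableP|exact: is_derive_lnln].
  case: dF => dF_ex dF_val; split => //; rewrite derive1E dF_val.
  have tl0 : 0 < t * ln t by rewrite mulr_gt0 ?ln_gt0 ?(lt_trans ltr01).
  have : `|derive1 rho t| < k / (t * ln t).
    by rewrite ltr_pdivlMr // mulrC; move: small; rewrite mulrAC normrM (gtr0_norm tl0).
  have : - (s * derive1 rho t) <= `|derive1 rho t|.
    by rewrite (le_trans (ler_norm _)) // normrN normrM ler_piMl.
  by rewrite -invfM (mulrC (ln t)); lra.
Unshelve. all: by end_near.
Qed.

Lemma proximate_order_increment (k : R) : 0 < k ->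
  \forall x \near +oo, forall l, 1 <= l -> `|rho (l * x) - rho x| * ln x <= k * ln l.
Proof.
move=> k0; near=> x => l l1.
have x1 : 1 < x by near: x; exact: (nbhs_pinfty_gt (num_real _)).
have xlx : x <= l * x by rewrite ler_peMl // ltW // (lt_trans ltr01 x1).
have up : rho x + k * ln (ln x) <= rho (l * x) + k * ln (ln (l * x)).
  rewrite -[rho x]mul1r -[rho (l * x)]mul1r; move: (l * x) xlx; near: x.
  by apply: proximate_order_lnln_homo; rewrite ?normr1.
have down : - rho x + k * ln (ln x) <= - rho (l * x) + k * ln (ln (l * x)).
  rewrite -[- rho x]mulN1r -[- rho (l * x)]mulN1r; move: (l * x) xlx; near: x.
  by apply: proximate_order_lnln_homo; rewrite ?normrN1.
have : k * (ln (ln (l * x)) - ln (ln x)) <= k * (ln l / ln x).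
  by rewrite ler_pM2l // lnlnM_le.
rewrite mulrBr -ler_pdivlMr ?ln_gt0 // -mulrA ler_norml => lnln_le.
by apply/andP; split; lra.
Unshelve. all: by end_near.
Qed.

End proximate_order.

Section power_ratio.
Context {R : realType}.

Definition power_ratio_bounded (f : R -> R) (r : R) : Prop :=
  exists2 C : R, 0 < C & forall e : R, 0 < e ->
    \forall x \near +oo, forall l : R, 1 <= l ->
      C^-1 * l `^ (r - e) <= f (l * x) / f x <= C * l `^ (r + e).

Lemma powR_boundsE (C l a b y : R) : 0 < C -> 0 < l -> 0 < y ->
  (C^-1 * l `^ a <= y <= C * l `^ b) =
  (- ln C + a * ln l <= ln y <= ln C + b * ln l).
Proof.
move=> C0 l0 y0; rewrite -{1 2}[y](lnK y0) -{1 2}[C](lnK C0) /powR gt_eqF //.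
by rewrite -expRN -!expRD !ler_expR.
Qed.

Lemma ln_bounds_of_ratio (A B s p t : R) : 0 < A -> 0 < t ->
  A <= s / t `^ p <= B -> 0 < s /\ ln A + p * ln t <= ln s <= ln B + p * ln t.
Proof.
move=> A0 t0 /andP[As sB]; have tp0 : 0 < t `^ p by rewrite powR_gt0.
have B0 := lt_le_trans A0 (le_trans As sB).
have sA : A * t `^ p <= s by rewrite -ler_pdivlMr.
have sB' : s <= B * t `^ p by rewrite -ler_pdivrMr.
have s0 : 0 < s := lt_le_trans (mulr_gt0 A0 tp0) sA.
split => //; rewrite -(ln_powR t p) -!lnM ?posrE //.
by rewrite !ler_ln ?posrE ?mulr_gt0 // sA sB'.
Qed.

Lemma admits_proximate_order_gt0 (sigma rho : R -> R) :
  admits_proximate_order sigma rho -> \forall t \near +oo, 0 < sigma t.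
Proof.
move=> [A [B [A0 _ sigma_AB]]]; near=> t.
have t0 : 0 < t by near: t; exact: (nbhs_pinfty_gt (num_real _)).
have sAB_t : A <= sigma t / t `^ rho t <= B by near: t.
by have [] := ln_bounds_of_ratio A0 t0 sAB_t.
Unshelve. all: by end_near.
Qed.

Lemma admits_proximate_order_power_ratio (sigma rho : R -> R) (c r : R) :
  proximate_order c rho r -> admits_proximate_order sigma rho ->
  power_ratio_bounded sigma r.
Proof.
move=> po [A [B [A0 B0 sigma_AB]]]; have [_ _ _ rho_r _] := po.
exists (B / A); first by rewrite divr_gt0.
move=> e e0; have e20 : 0 < e / 2 by rewrite divr_gt0.
near=> x => l l1.
have x1 : 1 < x by near: x; exact: (nbhs_pinfty_gt (num_real _)).
have x0 := lt_trans ltr01 x1; have l0 := lt_le_trans ltr01 l1.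
have xlx : x <= l * x by rewrite ler_peMl // ltW.
have lnl0 : 0 <= ln l := ln_ge0 l1; have lnx0 : 0 <= ln x := ln_ge0 (ltW x1).
have sigma_x : forall t, x <= t -> A <= sigma t / t `^ rho t <= B.
  by near: x; apply: near_pinfty_ge.
have rho_near : `|r - rho (l * x)| < e / 2.
  move: (l * x) xlx; near: x; apply: near_pinfty_ge.
  exact: (cvgr_dist_lt _ _ rho_r _ e20).
have incr : `|rho (l * x) - rho x| * ln x <= e / 2 * ln l.
  by move: l l1 {xlx l0 lnl0 rho_near}; near: x; exact: (proximate_order_increment po).
have [sx0 /andP[lnsx1 lnsx2]] := ln_bounds_of_ratio A0 x0 (sigma_x x (lexx x)).
have [slx0 /andP[lnslx1 lnslx2]] :=
  ln_bounds_of_ratio A0 (mulr_gt0 l0 x0) (sigma_x _ xlx).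
rewrite powR_boundsE ?divr_gt0 // ln_div ?posrE // ln_div ?posrE //.
rewrite lnM ?posrE // in lnslx1 lnslx2.
move: rho_near; rewrite ltr_norml => /andP[rho1 rho2].
have rho_l1 : (r - e / 2) * ln l <= rho (l * x) * ln l by rewrite ler_wpM2r //; lra.
have rho_l2 : rho (l * x) * ln l <= (r + e / 2) * ln l by rewrite ler_wpM2r //; lra.
move: incr; rewrite -(ger0_norm lnx0) -normrM ler_norml => /andP[incr1 incr2].
rewrite mulrDr in lnslx1 lnslx2; rewrite mulrBl in incr1 incr2.
by apply/andP; split; lra.
Unshelve. all: by end_near.
Qed.

End power_ratio.

Section power_ratio_indices.
Context {R : realType}.

Lemma exists_powR_gt (e M : R) : 0 < e -> exists2 L, 1 < L & M < L `^ e.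
Proof.
move=> e0; exists (expR ((`|M| + 1) / e)); first by rewrite expR_gt1 divr_gt0.
rewrite /powR gt_eqF ?expR_gt0 // expRK mulrC divfK ?gt_eqF //.
apply: (le_lt_trans (ler_norm M)); apply: (lt_le_trans _ (expR_ge1Dx _)); lra.
Qed.

Context {f : R -> R} {r : R} (fr : power_ratio_bounded f r).

Lemma power_ratio_bounded_scaled : exists2 C, 0 < C & forall e, 0 < e ->
  \forall x \near +oo, forall l a, 1 <= l ->
    C^-1 * l `^ (r - e - a) <= f (l * x) / (l `^ a * f x) <= C * l `^ (r + e - a).
Proof.
case: fr => C C0 fC; exists C => // e /fC; apply: filterS => x fCx l a l1.
have l0 : l != 0 by rewrite gt_eqF // (lt_le_trans ltr01 l1).
have la0 : 0 < l `^ a by rewrite powR_gt0 // (lt_le_trans ltr01).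
rewrite invfM mulrA mulrAC [l `^ (r - e - a)]powRB ?l0 ?implybT //.
rewrite [l `^ (r + e - a)]powRB ?l0 ?implybT // !mulrA !ler_pM2r ?invr_gt0 //.
exact: fCx.
Qed.

Lemma index_alpha_power_ratio : index_alpha f = r%:E.
Proof.
have [C C0 fC] := power_ratio_bounded_scaled.
apply/le_anti/andP; split.
  apply/lee_addgt0Pr => e e0; apply: ge_ereal_inf; exists (r + e)%:E => //.
  exists (r + e) => //; exists C => // L _.
  apply: limf_esup_le_near; apply: filterS (fC e e0) => x fCx.
  apply: ge_ereal_sup => _ [l + <-]; rewrite /= in_itv /= => /andP[l1 _].
  by have /andP[_] := fCx l (r + e) l1; rewrite subrr powRr0 mulr1 lee_fin.
apply: le_ereal_inf_tmp => _ [a [C' C'0 fC'] <-]; rewrite lee_fin leNgt.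
apply/negP => ar; set e := (r - a) / 2; have e0 : 0 < e by rewrite divr_gt0 ?subr_gt0.
have [L L1 CL] := exists_powR_gt (C * C') e0.
suff : (C'%:E < limsup_pinfty (sup_ratio f a L))%E by rewrite ltNge fC'.
apply: (@lt_le_trans _ _ (C^-1 * L `^ e)%:E).
  by rewrite lte_fin mulrC ltr_pdivlMr // mulrC.
apply: limf_esup_ge_near; apply: filterS (fC e e0) => x fCx.
apply: le_ereal_sup_tmp; exists (f (L * x) / (L `^ a * f x))%:E.
  by exists L => //=; rewrite in_itv /= lexx ltW.
have /andP[+ _] := fCx L a (ltW L1); rewrite lee_fin.
by have -> : r - e - a = e by rewrite /e; field.
Qed.

Lemma index_beta_power_ratio : index_beta f = r%:E.
Proof.
have [C C0 fC] := power_ratio_bounded_scaled.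
apply/le_anti/andP; split; last first.
  apply/lee_subgt0Pr => e e0; apply: le_ereal_sup_tmp; exists (r - e)%:E => //.
  exists (r - e) => //; exists C^-1; rewrite ?invr_gt0 // => L _.
  apply: limf_einf_ge_near; apply: filterS (fC e e0) => x fCx.
  apply: le_ereal_inf_tmp => _ [l + <-]; rewrite /= in_itv /= => /andP[l1 _].
  by have /andP[+ _] := fCx l (r - e) l1; rewrite subrr powRr0 mulr1 lee_fin.
apply: ge_ereal_sup => _ [b [D D0 fD] <-]; rewrite lee_fin leNgt.
apply/negP => rb; set e := (b - r) / 2; have e0 : 0 < e by rewrite divr_gt0 ?subr_gt0.
have [L L1 CL] := exists_powR_gt (C / D) e0.
suff : (liminf_pinfty (inf_ratio f b L) < D%:E)%E by rewrite ltNge fD.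
apply: (@le_lt_trans _ _ (C * L `^ (- e))%:E); last first.
  rewrite lte_fin powRN -ltr_pdivlMr ?invr_gt0 ?powR_gt0 ?(lt_trans ltr01) // invrK.
  by rewrite -ltr_pdivrMl // mulrC.
apply: limf_einf_le_near; apply: filterS (fC e e0) => x fCx.
apply: ge_ereal_inf; exists (f (L * x) / (L `^ b * f x))%:E.
  by exists L => //=; rewrite in_itv /= lexx ltW.
have /andP[_] := fCx L b (ltW L1); rewrite lee_fin.
by have -> : r + e - b = - e by rewrite /e; field.
Qed.

Lemma ln_power_ratio_cvg : (\forall x \near +oo, 0 < f x) ->
  ln (f x) / ln x @[x --> +oo] --> r.
Proof.
move=> f_gt0; case: fr => C C0 fC; apply/cvgrPdist_le => e e0.
have e20 : 0 < e / 2 by rewrite divr_gt0.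
have [x0 [fCx0 [fx0 x0_gt1]]] := filter_ex
  (filterI (fC _ e20) (filterI f_gt0 (nbhs_pinfty_gt (num_real 1)))).
have x00 := lt_trans ltr01 x0_gt1.
set K1 := ln (f x0) + ln C - (r + e / 2) * ln x0.
set K2 := ln (f x0) - ln C - (r - e / 2) * ln x0.
near=> x.
have x0x : x0 < x by near: x; exact: (nbhs_pinfty_gt (num_real _)).
have x_big : expR ((`|K1| + `|K2|) / (e / 2)) < x.
  by near: x; exact: (nbhs_pinfty_gt (num_real _)).
have lnx0 : 0 < ln x by rewrite ln_gt0 ?(lt_trans x0_gt1).
have K_small : `|K1| + `|K2| <= e / 2 * ln x.
  rewrite mulrC -ler_pdivrMr // -[_ / _]expRK ler_ln ?posrE ?expR_gt0 ?(lt_trans x00) //.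
have := fCx0 (x / x0); rewrite ler_pdivlMr // mul1r divfK ?gt_eqF // => /(_ (ltW x0x)).
have fx : 0 < f x by near: x; apply: filterS f_gt0.
have x_pos : 0 < x := lt_trans x00 x0x.
rewrite powR_boundsE ?divr_gt0 // !ln_div ?posrE // => /andP[lo hi].
rewrite -(ler_pM2r lnx0) -[X in _ * X <= _](gtr0_norm lnx0) -normrM mulrBl.
rewrite divfK ?gt_eqF //.
have := ler_norm K1; have := ler_norm (- K2); rewrite normrN.
have := normr_ge0 K1; have := normr_ge0 K2.
have -> : e * ln x = e / 2 * ln x + e / 2 * ln x by rewrite -mulrDl -splitr.
rewrite mulrBr [(r - e / 2) * ln x]mulrBl in lo.
rewrite mulrBr [(r + e / 2) * ln x]mulrDl in hi.
by move: K_small; rewrite /K1 /K2 ler_norml => *; apply/andP; split; lra.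
Unshelve. all: by end_near.
Qed.

Lemma index_mu_rho_power_ratio : (\forall x \near +oo, 0 < f x) ->
  index_mu f = r%:E /\ index_rho f = r%:E.
Proof. by move=> /ln_power_ratio_cvg/limf_esup_einf_cvg[]. Qed.

Lemma omega1_power_ratio : omega1 f.
Proof.
case: fr => C C0 fC; exists (C * 2 `^ (r + 1)).
apply: filterS (fC 1 ltr01) => x fCx.
have /andP[lo hi] := fCx 2 (ler1n _ _).
have ratio0 : 0 < f (2 * x) / f x.
  by apply: lt_le_trans lo; rewrite mulr_gt0 ?invr_gt0 ?powR_gt0.
have fx0 : f x != 0 by apply: contraTneq ratio0 => ->; rewrite invr0 mulr0 ltxx.
by rewrite -[f (2 * x)](divfK fx0) normrM ler_pM2r ?normr_gt0 // (gtr0_norm ratio0).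
Qed.

Lemma omega6_power_ratio : (forall t, 0 <= t -> 0 <= f t) ->
  (forall s t, 0 <= s -> s <= t -> f s <= f t) -> 0 < r -> omega6 f.
Proof.
move=> f_ge0 f_nd r0; case: fr => C C0 fC; have r20 : 0 < r / 2 by rewrite divr_gt0.
have [L L1 CL] := exists_powR_gt (2 * C) r20.
have [X [_ fCX]] := fC _ r20.
have L2 : 2 < C^-1 * L `^ (r / 2) by rewrite mulrC ltr_pdivlMr // mulrC.
have H1 : 1 <= Num.max L (2 * f X) by rewrite le_max (ltW L1).
exists (Num.max L (2 * f X)) => // t t0.
have fHt := f_ge0 _ (mulr_ge0 (le_trans ler01 H1) t0).
have [tX|Xt] := leP t X.
  have : 2 * f X <= Num.max L (2 * f X) by rewrite le_max lexx orbT.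
  have := f_nd _ _ t0 tX; lra.
have /andP[+ _] := fCX t Xt L (ltW L1).
rewrite {1}[r](splitr r) addrK => /(lt_le_trans L2) ratio2.
have ft0 : 0 < f t.
  rewrite lt0r f_ge0 // andbT; apply: contraTneq ratio2 => ->.
  by rewrite invr0 mulr0 -leNgt ler0n.
have : f (L * t) <= f (Num.max L (2 * f X) * t).
  by apply: f_nd; rewrite ?mulr_ge0 ?ler_wpM2r // ?le_max ?lexx // ltW // (lt_trans ltr01).
move: ratio2; rewrite ltr_pdivlMr //; lra.
Qed.

End power_ratio_indices.

Theorem corollary4p16 (R : realType) (sigma rho : R -> R) (c r : R) :
  (forall t, 0 <= t -> 0 <= sigma t) ->
  (forall s t, 0 <= s -> s <= t -> sigma s <= sigma t) ->
  sigma t @[t --> +oo] --> +oo ->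
  proximate_order c rho r ->
  admits_proximate_order sigma rho ->
  [/\ index_beta sigma = r%:E, index_mu sigma = r%:E,
      index_rho sigma = r%:E, index_alpha sigma = r%:E &
      (0 < r -> omega1 sigma /\ omega6 sigma)].
Proof.
move=> sigma_ge0 sigma_nd _ po ad.
have fr := admits_proximate_order_power_ratio po ad.
have [mu_r rho_r] := index_mu_rho_power_ratio fr (admits_proximate_order_gt0 ad).
split => //; first exact: index_beta_power_ratio fr.
  exact: index_alpha_power_ratio fr.
move=> r0; split; first exact: omega1_power_ratio fr.
exact: omega6_power_ratio fr sigma_ge0 sigma_nd r0.
Qed.
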